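(* Let $\mathcal{A}$ be a collection of pairwise non-parallel hyperplanes in $Q=S_1\times\cdots\times S_n$, let $0\le a\le n$, let $\mathbb{P}_a$ be a probability measure on $Q_a$, let $\delta_{a+1},\dots,\delta_n\in[0,1/2]$, and let $\mathbb{P}_k$, $\alpha_k$ be defined as in the context. Then for every $a<k\le n$ and every $t\in\mathbb{N}$, $$\mathbb{E}_{k-1}\big[\alpha_k(x)^t\big]\le\frac{1}{|S_k|^t}\sum_{F_1,\dots,F_t\in\mathcal{N}_k} c\big((F_1\cup\cdots\cup F_t)\cap[a]\big)\cdot\nu\big((F_1\cup\cdots\cup F_t)\cap[a+1,k-1]\big).$$
   Context: $S_1,\dots,S_n$ are finite sets each with at least two elements; $Q_k = S_1\times\cdots\times S_k$. A hyperplane is $A = A_1\times\cdots\times A_n\subseteq Q$ with each $A_k$ either $S_k$ or a singleton in $S_k$; $F(A)=\{k: A_k\text{ is a singleton}\}$; hyperplanes are parallel if they have the same $F$. Hyperplanes in $\mathcal{A}$ have non-empty $F(A)$; write $\mathcal{A}=\{A_F:F\in\mathcal{F}\}$. A set $X\subseteq Q_k$ is identified with $X\times S_{k+1}\times\cdots\times S_n$; a hyperplane with $F(A)\subseteq[k]$ is viewed as a subset of $Q_k$. Let $\mathcal{F}_k=\{F\in\mathcal{F}:F\subseteq[k]\}$, $\mathcal{N}_k=\mathcal{F}_k\setminus\mathcal{F}_{k-1}$, $B_k=\bigcup_{F\in\mathcal{N}_k}A_F\subseteq Q_k$. For $k>a$, given $\mathbb{P}_{k-1}$ on $Q_{k-1}$,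 let $\alpha_k(x)=|\{y\in S_k:(x,y)\in B_k\}|/|S_k|$ for $x\in Q_{k-1}$, and define $\mathbb{P}_k(x,y)=\max\{0,\frac{\alpha_k(x)-\delta_k}{\alpha_k(x)(1-\delta_k)}\}\frac{\mathbb{P}_{k-1}(x)}{|S_k|}$ if $(x,y)\in B_k$ and $\mathbb{P}_k(x,y)=\min\{\frac{1}{1-\alpha_k(x)},\frac{1}{1-\delta_k}\}\frac{\mathbb{P}_{k-1}(x)}{|S_k|}$ otherwise. $\mathbb{E}_{k-1}$ is expectation over $x\sim\mathbb{P}_{k-1}$. For $I\subseteq[a]$, $c(I)=\max\{\mathbb{P}_a(H):H\text{ a hyperplane in }Q_a\text{ with }F(H)=I\}$ (so $c(\emptyset)=1$); for $J\subseteq[a+1,n]$, $\nu(J)=\prod_{j\in J}\frac{1}{(1-\delta_j)|S_j|}$ (so $\nu(\emptyset)=1$). *)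

From HB Require Import structures.
From mathcomp Require Import all_boot all_order all_algebra.
Set Implicit Arguments. Unset Strict Implicit. Unset Printing Implicit Defensive.
Import Order.TTheory GRing.Theory Num.Theory.
Local Open Scope ring_scope.

(* Encoding:
   - All S_j (1 <= j <= n, paper indexing) are subsets  S j : {set T}  of a
     common finite type T.
   - Coordinates are the ordinals i : 'I_n; ordinal i is the paper's
     coordinate i+1.  So the paper's [k] = {1..k} is {i : 'I_n | i < k}.
   - A point of Q_k = S_1 x ... x S_k is encoded as x : {ffun 'I_n -> option T}
     with x i = Some y, y \in S (i+1), for i < k, and x i = None for i >= k.
   - A hyperplane with fixed-coordinate set F and fixed values g is
     { x | forall i in F, x i = Some (g i) }. *)

Definition pt (n : nat) (T : finType) := {ffun 'I_n -> option T}.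

Section Defs.
Variables (R : realFieldType) (n : nat) (T : finType) (S : nat -> {set T}).

Definition inQ (k : nat) (x : pt n T) : bool :=
  [forall i : 'I_n, if (i < k)%N then
                      (if x i is Some y then y \in S i.+1 else false)
                    else x i == None].

Definition Qset (k : nat) : {set pt n T} := [set x | inQ k x].

Definition subk (F : {set 'I_n}) (k : nat) : bool := [forall i in F, (i < k)%N].

Definition inA (g : {ffun 'I_n -> T}) (F : {set 'I_n}) (x : pt n T) : bool :=
  [forall i in F, x i == Some (g i)].

(* (x, y) : coordinate j (0-based, i.e. paper coordinate j+1) set to y *)
Definition ext (j : nat) (x : pt n T) (y : T) : pt n T :=
  [ffun i : 'I_n => if (i : nat) == j then Some y else x i].

Definition trunc (j : nat) (z : pt n T) : pt n T :=
  [ffun i : 'I_n => if (i < j)%N then z i else None].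

Variables (Fam : {set {set 'I_n}}) (h : {set 'I_n} -> {ffun 'I_n -> T}).
(* the arrangement A = { A_F : F in Fam }, A_F fixes coordinate i in F to h F i *)

Definition Nk (k : nat) : {set {set 'I_n}} :=
  [set F in Fam | subk F k && ~~ subk F k.-1].

Definition inB (k : nat) (z : pt n T) : bool :=
  [exists F in Nk k, inA (h F) F z].

Definition alpha (k : nat) (x : pt n T) : R :=
  #|[set y in S k | inB k (ext k.-1 x y)]|%:R / #|S k|%:R.

Variables (a : nat) (Pa : pt n T -> R) (delta : nat -> R).

Definition step (k : nat) (Pprev : pt n T -> R) (z : pt n T) : R :=
  let x := trunc k.-1 z in
  let al := alpha k x in
  (if inB k z then Num.max 0 ((al - delta k) / (al * (1 - delta k)))
   else Num.min (1 - al)^-1 (1 - delta k)^-1) * Pprev x / #|S k|%:R.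

(* P_k for k >= a (P_k = P_a for k <= a; only k >= a is meaningful) *)
Fixpoint Pk (k : nat) : pt n T -> R :=
  match k with
  | 0 => Pa
  | k'.+1 => if (k'.+1 <= a)%N then Pa else step k'.+1 (Pk k')
  end.

Definition Ealpha (k t : nat) : R :=
  \sum_(x in Qset k.-1) Pk k.-1 x * alpha k x ^+ t.

Definition cI (I : {set 'I_n}) : R :=
  \big[Num.max/0]_(g : {ffun 'I_n -> T} | [forall i in I, g i \in S i.+1])
     \sum_(x in Qset a | inA g I x) Pa x.

Definition nu (J : {set 'I_n}) : R :=
  \prod_(i in J) ((1 - delta i.+1) * #|S i.+1|%:R)^-1.

Definition rhs (k t : nat) : R :=
  (#|S k|%:R ^+ t)^-1 *
  \sum_(Fs : {ffun 'I_t -> {set 'I_n}} | [forall j, Fs j \in Nk k])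
     (cI [set i in \bigcup_(j < t) Fs j | (i < a)%N] *
      nu [set i in \bigcup_(j < t) Fs j | (a <= i)%N && (i.+1 < k)%N]).

End Defs.

(* Every F in N_k fixes coordinate k, so for x in Q_{k-1} each such F contributes at most
   one y with (x, y) in A_F, and only if x already lies in the hyperplane A_F with
   coordinate k released; hence alpha_k(x) <= |S_k|^-1 sum_{F in N_k} 1[x in A_F \ k].
   Expanding the t-th power, a product of these indicators is at most the indicator of one
   hyperplane of Q_{k-1} with fixed set (F_1 u ... u F_t) n [k-1].  Passing from P_{j-1}
   to P_j, the weight P_{j-1}(x)/|S_j| of each point (x, y) is multiplied by at most
   1/(1 - delta_j), and by at most 1 on average over y; so fixing coordinate j > a costs
   the factor 1/((1 - delta_j)|S_j|) of nu while a free coordinate costs nothing.  What is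
   left is the P_a-mass of a hyperplane of Q_a, which is at most c. *)

From HB Require Import structures.
From mathcomp Require Import all_boot all_order all_algebra.
From mathcomp Require Import zify ring lra.
Import Order.TTheory GRing.Theory Num.Theory.
Local Open Scope ring_scope.
Set Implicit Arguments. Unset Strict Implicit. Unset Printing Implicit Defensive.

Section StepFactor.
Variable R : realFieldType.

Definition step_factor (b : bool) (al d : R) : R :=
  if b then Num.max 0 ((al - d) / (al * (1 - d)))
  else Num.min (1 - al)^-1 (1 - d)^-1.

Lemma step_factor_ge0 b al d : al <= 1 -> d <= 1 -> 0 <= step_factor b al d.
Proof.
move=> al_le1 d_le1; case: b; first by rewrite le_max lexx.
by rewrite le_min !invr_ge0 !subr_ge0 al_le1.
Qed.

Lemma step_factor_le b al d : 0 <= al -> 0 <= d < 1 -> step_factor b al d <= (1 - d)^-1.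
Proof.
move=> al_ge0 /andP[d_ge0 d_lt1]; have d1 : 0 < 1 - d by rewrite subr_gt0.
case: b; last by rewrite ge_min lexx orbT.
rewrite ge_max invr_ge0 ltW //=.
have [->|al_neq0] := eqVneq al 0; first by rewrite mul0r invr0 mulr0 invr_ge0 ltW.
have al_gt0 : 0 < al by rewrite lt_def al_neq0.
rewrite invfM mulrA ler_pdivrMr ?invr_gt0 // mulVf ?gt_eqF //.
by rewrite ler_pdivrMr // mul1r lerBlDr lerDl.
Qed.

Lemma step_factor_mean al d : 0 <= al <= 1 -> 0 <= d < 1 ->
  al * step_factor true al d + (1 - al) * step_factor false al d <= 1.
Proof.
move=> /andP[al_ge0 al_le1] /andP[d_ge0 d_lt1]; rewrite /step_factor.
have d1 : 0 < 1 - d by rewrite subr_gt0.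
have [al_le_d|d_lt_al] := leP al d.
  have al1 : 0 < 1 - al by lra.
  have -> : Num.max 0 ((al - d) / (al * (1 - d))) = 0.
    by apply/max_l/mulr_le0_ge0; rewrite ?invr_ge0 ?mulr_ge0 ?subr_le0 // ltW.
  rewrite mulr0 add0r -[leRHS](mulfV (lt0r_neq0 al1)).
  rewrite ler_wpM2l ?ge_min ?lexx //; exact: ltW.
have al_gt0 : 0 < al := le_lt_trans d_ge0 d_lt_al.
have -> : Num.max 0 ((al - d) / (al * (1 - d))) = (al - d) / (al * (1 - d)).
  by apply/max_r; rewrite divr_ge0 ?mulr_ge0 ?subr_ge0 ?ltW.
have B_le : (1 - al) * Num.min (1 - al)^-1 (1 - d)^-1 <= (1 - al) / (1 - d).
  by rewrite ler_wpM2l ?subr_ge0 // ge_min lexx orbT.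
apply: le_trans (lerD (lexx _) B_le) _.
suff -> : al * ((al - d) / (al * (1 - d))) + (1 - al) / (1 - d) = 1 by [].
by field; rewrite !gt_eqF.
Qed.

End StepFactor.

Lemma sumr_pred_card (R : pzSemiRingType) (I : finType) (A : {set I}) (b : pred I) :
  \sum_(y in A) (b y)%:R = #|[set y in A | b y]|%:R :> R.
Proof.
rewrite -sum1_card natr_sum big_mkcond [RHS]big_mkcond /=.
by apply: eq_bigr => y _; rewrite inE; case: (y \in A); case: (b y).
Qed.

Lemma sum_step_factor (R : realFieldType) (I : finType) (A : {set I}) (b : pred I) (d : R) :
  0 <= d < 1 ->
  \sum_(y in A) step_factor (b y) (#|[set y in A | b y]|%:R / #|A|%:R) d <= #|A|%:R.
Proof.
move=> /andP[d0 d1]; have [A0|A_gt0] := posnP #|A|.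
  by rewrite (eq_bigl _ _ (card0_eq A0)) big_pred0_eq A0.
set al := _ / _; set s := #|A|%:R.
have s_gt0 : 0 < s by rewrite ltr0n.
have Bsel : \sum_(y in A) (b y)%:R = al * s by rewrite sumr_pred_card divfK ?gt_eqF.
have al_le1 : al <= 1.
  rewrite ler_pdivrMr // mul1r ler_nat subset_leq_card //.
  by apply/subsetP => y; rewrite inE => /andP[].
have al0 : 0 <= al by rewrite divr_ge0.
pose u := step_factor true al d; pose v := step_factor false al d.
have -> : \sum_(y in A) step_factor (b y) al d = \sum_(y in A) (v + (b y)%:R * (u - v)).
  by apply: eq_bigr => y _; rewrite /u /v; case: (b y) => /=; ring.
rewrite big_split /= sumr_const -mulr_suml Bsel -mulr_natr -/s.
have := step_factor_mean (introT andP (conj al0 al_le1)) (introT andP (conj d0 d1)).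
rewrite -/u -/v; nra.
Qed.

Section Points.
Variables (n : nat) (T : finType) (S : nat -> {set T}).

Lemma inQP k (x : pt n T) :
  reflect (forall i : 'I_n, if (i < k)%N then (if x i is Some y then y \in S i.+1 else false)
                            else x i == None)
          (inQ S k x).
Proof. exact: forallP. Qed.

Lemma trunc_ext m (x : pt n T) y : inQ S m x -> trunc m (ext m x y) = x.
Proof.
move/inQP=> Hx; apply/ffunP=> i; rewrite !ffunE.
by have := Hx i; case: ltnP => [/ltn_eqF -> | _ /eqP].
Qed.

Lemma ext_inQ m (x : pt n T) y : inQ S m x -> y \in S m.+1 -> inQ S m.+1 (ext m x y).
Proof.
move/inQP=> Hx Hy; apply/inQP=> i; rewrite ffunE ltnS.
by have := Hx i; case: ltngtP => // ->.
Qed.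

Lemma trunc_inQ m (z : pt n T) : inQ S m.+1 z -> inQ S m (trunc m z).
Proof.
move/inQP=> Hz; apply/inQP=> i; rewrite ffunE; have := Hz i.
by case: (ltnP i m) => Hi //; rewrite ltnS (ltnW Hi).
Qed.

Lemma sum_Qset_succ (V : nmodType) m (f : pt n T -> V) : (m < n)%N ->
  \sum_(z in Qset n S m.+1) f z = \sum_(x in Qset n S m) \sum_(y in S m.+1) f (ext m x y).
Proof.
move=> Hm; rewrite pair_big_dep /=.
pose A := [pred p : pt n T * T | (p.1 \in Qset n S m) && (p.2 \in S m.+1)].
have ext_inj : {in A &, injective (fun p => ext m p.1 p.2)}.
  move=> [x y] [x' y']; rewrite !inE => /andP[/= Hx _] /andP[/= Hx' _] E.
  have mth := congr1 (fun f : pt n T => f (Ordinal Hm)) E; rewrite !ffunE /= eqxx in mth.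
  by rewrite -(trunc_ext y Hx) -(trunc_ext y' Hx') E; case: mth => ->.
rewrite -(big_imset f ext_inj); apply: eq_bigl => z; rewrite inE.
apply/idP/imsetP => [Hz | [[x y] /andP[/= Hx Hy] ->]]; last by rewrite inE in Hx; exact: ext_inQ.
have /inQP Hq := Hz; have := Hq (Ordinal Hm); rewrite /= ltnSn.
case Ez: (z _) => [y|] // Hy.
exists (trunc m z, y); first by rewrite inE /= Hy andbT inE trunc_inQ.
apply/ffunP=> i; rewrite !ffunE /=; case: ltngtP => Hi //.
  by have := Hq i; rewrite ltnS leqNgt Hi => /eqP.
by rewrite -Ez; congr (z _); apply: val_inj.
Qed.

Lemma inA_ext m (Hm : (m < n)%N) g (U : {set 'I_n}) (x : pt n T) y :
  inA g [set i in U | (i < m.+1)%N] (ext m x y) =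
  inA g [set i in U | (i < m)%N] x && ((Ordinal Hm \in U) ==> (y == g (Ordinal Hm))).
Proof.
apply/forall_inP/andP => [H | [/forall_inP H Hy] i].
  split.
    apply/forall_inP => i; rewrite inE => /andP[iU im].
    by have := H i; rewrite inE iU ltnS ltnW //= ffunE ltn_eqF //; apply.
  apply/implyP => mU; have := H (Ordinal Hm); rewrite inE mU ltnSn ffunE eqxx.
  by move=> /(_ isT) /eqP[->].
rewrite inE ltnS leq_eqVlt => /andP[iU /orP[/eqP im | im]]; rewrite ffunE.
  have i_m : i = Ordinal Hm by exact: val_inj.
  by move: Hy; rewrite -i_m iU im eqxx => /eqP ->.
by rewrite ltn_eqF //; apply: H; rewrite inE iU.
Qed.

End Points.

Section Mass.
Variables (R : realFieldType) (n : nat) (T : finType) (S : nat -> {set T}).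
Variables (Fam : {set {set 'I_n}}) (h : {set 'I_n} -> {ffun 'I_n -> T}) (delta : nat -> R).

Definition hmass (Q : pt n T -> R) (m : nat) (g : {ffun 'I_n -> T}) (U : {set 'I_n}) : R :=
  \sum_(x in Qset n S m | inA g [set i in U | (i < m)%N] x) Q x.

Lemma alpha_ge0 k x : 0 <= alpha R S Fam h k x.
Proof. by rewrite divr_ge0. Qed.

Lemma alpha_le1 k x : alpha R S Fam h k x <= 1.
Proof.
have [S0|S_gt0] := posnP #|S k|; first by rewrite /alpha S0 invr0 mulr0.
rewrite ler_pdivrMr ?ltr0n // mul1r ler_nat subset_leq_card //.
by apply/subsetP => y; rewrite inE => /andP[].
Qed.

Section Step.
Variables (m : nat) (Hm : (m < n)%N) (Q : pt n T -> R).
Hypotheses (Q_ge0 : forall x, x \in Qset n S m -> 0 <= Q x)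
  (S_succ_gt0 : (0 < #|S m.+1|)%N) (delta_ge0 : 0 <= delta m.+1) (delta_lt1 : delta m.+1 < 1).

Local Notation P' := (step S Fam h delta m.+1 Q).

Lemma step_ext x y : inQ S m x ->
  P' (ext m x y) =
  step_factor (inB Fam h m.+1 (ext m x y)) (alpha R S Fam h m.+1 x) (delta m.+1)
  * Q x / #|S m.+1|%:R.
Proof. by move=> Hx; rewrite /step /= (trunc_ext y Hx). Qed.

Lemma step_ge0 z : z \in Qset n S m.+1 -> 0 <= P' z.
Proof.
rewrite inE => /trunc_inQ Hz.
rewrite /step /= !mulr_ge0 ?invr_ge0 ?ler0n ?Q_ge0 ?inE //.
exact: (step_factor_ge0 (inB Fam h m.+1 z) (alpha_le1 _ _) (ltW delta_lt1)).
Qed.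

Lemma hmass_step g U :
  hmass P' m.+1 g U <=
  hmass Q m g U * (if Ordinal Hm \in U then ((1 - delta m.+1) * #|S m.+1|%:R)^-1 else 1).
Proof.
have s_gt0 : 0 < #|S m.+1|%:R :> R by rewrite ltr0n.
rewrite /hmass big_mkcondr sum_Qset_succ // mulr_suml [leRHS]big_mkcondr /=.
apply: ler_sum => x; rewrite inE => Hx.
under eq_bigr => y _ do rewrite inA_ext step_ext //.
case: (inA g _ x) => /=; last by rewrite big1.
under eq_bigr => y _ do rewrite -mulrA.
rewrite -big_mkcondr -mulr_suml.
have Qx_ge0 : 0 <= Q x / #|S m.+1|%:R by rewrite divr_ge0 ?ler0n ?Q_ge0 ?inE.
case: (Ordinal Hm \in U) => /=.
  set g0 := g (Ordinal Hm).
  have [g0S | g0S] := boolP (g0 \in S m.+1); last first.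
    rewrite big_pred0 => [|y]; last by apply: contraNF g0S => /andP[yS /eqP <-].
    by rewrite mul0r divr_ge0 ?Q_ge0 ?inE ?mulr_ge0 ?ler0n ?subr_ge0 ?ltW.
  rewrite (big_pred1 g0) => [|y]; last by rewrite /= andb_idl // => /eqP ->.
  rewrite invfM [leRHS]mulrCA ler_wpM2r // step_factor_le ?alpha_ge0 //.
  by rewrite delta_ge0 delta_lt1.
rewrite mulr1 -[leRHS](divfK (lt0r_neq0 s_gt0)) [leRHS]mulrC ler_wpM2r //.
under eq_bigl => y do rewrite andbT.
by apply: sum_step_factor; rewrite delta_ge0 delta_lt1.
Qed.

End Step.
End Mass.

Lemma expr_sum_ffun (R : comNzRingType) (I : finType) (A : {set I}) (w : I -> R) t :
  (\sum_(i in A) w i) ^+ t =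
  \sum_(f : {ffun 'I_t -> I} | [forall j, f j \in A]) \prod_(j < t) w (f j).
Proof.
rewrite -[t in LHS]card_ord -prodr_const bigA_distr_big.
by apply: eq_bigl => f; apply/ffun_onP/forallP.
Qed.

Section Main.
Variables (R : realFieldType) (n : nat) (T : finType) (S : nat -> {set T}).
Hypothesis hS : forall j, (1 <= j <= n)%N -> (2 <= #|S j|)%N.
Variables (Fam : {set {set 'I_n}}) (h : {set 'I_n} -> {ffun 'I_n -> T}).
Variables (a : nat) (Pa : pt n T -> R) (delta : nat -> R).
Hypothesis hPa0 : forall x, x \in Qset n S a -> 0 <= Pa x.
Hypothesis hdelta : forall j, (a < j <= n)%N -> 0 <= delta j <= 1 / 2.

Local Notation P := (Pk S Fam h a Pa delta).

Lemma S_gt0 j : (1 <= j <= n)%N -> (0 < #|S j|)%N.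
Proof. by move/hS; apply: leq_trans. Qed.

Lemma delta_range j : (a < j <= n)%N -> 0 <= delta j < 1.
Proof. by move/hdelta => /andP[-> d_le]; apply: le_lt_trans d_le _; lra. Qed.

Lemma Pk_a : P a = Pa.
Proof. by case: a => //= a'; rewrite leqnn. Qed.

Lemma Pk_succ m : (a <= m)%N -> P m.+1 = step S Fam h delta m.+1 (P m).
Proof. by move=> am /=; rewrite leqNgt ltnS am. Qed.

Lemma Pk_ge0 m x : (a <= m <= n)%N -> x \in Qset n S m -> 0 <= P m x.
Proof.
elim: m x => [|m IH] x /andP[am mn].
  by move: am; rewrite leqn0 => /eqP a0 Hx; apply: hPa0; rewrite a0.
have [{}am | ma] := leqP a m; last first.
  have a_eq : a = m.+1 by lia.
  by rewrite -a_eq Pk_a; apply: hPa0.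
have /andP[d_ge0 d_lt1] : 0 <= delta m.+1 < 1 by apply: delta_range; rewrite ltnS am.
rewrite Pk_succ //; apply: step_ge0 => //.
by move=> y; apply: IH; rewrite am ltnW.
Qed.

Lemma nu_succ m (Hm : (m < n)%N) (U : {set 'I_n}) : (a <= m)%N ->
  nu S delta [set i in U | (a <= i)%N && (i < m.+1)%N] =
  nu S delta [set i in U | (a <= i)%N && (i < m)%N] *
  (if Ordinal Hm \in U then ((1 - delta m.+1) * #|S m.+1|%:R)^-1 else 1).
Proof.
move=> am; pose mo := Ordinal Hm.
have memJ i : (i \in [set i in U | (a <= i)%N && (i < m.+1)%N]) =
    (i \in [set i in U | (a <= i)%N && (i < m)%N]) || ((i \in U) && (i == mo)).
  rewrite !inE ltnS [(i <= m)%N]leq_eqVlt -val_eqE /=.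
  by case: eqP => [->|_]; rewrite ?am ?ltnn ?andbF ?orbF //; case: (i \in U).
rewrite /nu; case: ifP => mU.
  rewrite (bigD1 mo) /=; last by rewrite memJ mU eqxx orbT.
  rewrite mulrC; congr (_ * _); apply: eq_bigl => i.
  by rewrite memJ; case: eqP => [->|]; rewrite ?inE ?ltnn ?andbF ?andbT ?orbF.
rewrite mulr1; apply: eq_bigl => i; rewrite memJ.
by case: eqP => [->|]; rewrite ?mU ?andbF ?orbF.
Qed.

Lemma hmass_Pk_le m g U : (a <= m <= n)%N ->
  hmass S (P m) m g U <= hmass S Pa a g U * nu S delta [set i in U | (a <= i)%N && (i < m)%N].
Proof.
case/andP=> am; rewrite -(subnKC am); elim: (m - a)%N => [|d IH] mn.
  rewrite addn0 Pk_a /nu big_pred0 ?mulr1 // => i.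
  by rewrite !inE; case: leqP; rewrite ?andbF.
have mn' : (a + d < n)%N by rewrite -addnS.
have /andP[d_ge0 d_lt1] : 0 <= delta (a + d).+1 < 1.
  by apply: delta_range; rewrite ltnS leq_addr.
rewrite addnS Pk_succ ?leq_addr // (nu_succ mn') ?leq_addr // mulrA.
have Pk_ge0' x : x \in Qset n S (a + d) -> 0 <= P (a + d) x.
  by apply: Pk_ge0; rewrite leq_addr ltnW.
have S_succ_gt0 : (0 < #|S (a + d).+1|)%N by apply: S_gt0; rewrite mn'.
apply: le_trans (hmass_step Fam h mn' Pk_ge0' S_succ_gt0 d_ge0 d_lt1 g U) _.
apply: ler_wpM2r; last exact/IH/ltnW.
case: ifP => // _; rewrite invr_ge0 mulr_ge0 ?ler0n ?subr_ge0 //; exact: ltW.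
Qed.

Lemma nu_ge0 (J : {set 'I_n}) : (forall i, i \in J -> (a <= i)%N) -> 0 <= nu S delta J.
Proof.
move=> Ja; apply: prodr_ge0 => i /Ja ai.
have /andP[_ d_lt1] : 0 <= delta i.+1 < 1 by apply: delta_range; rewrite ltnS ai ltn_ord.
by rewrite invr_ge0 mulr_ge0 ?ler0n // subr_ge0 ltW.
Qed.

Lemma hmass_le_cI (g : {ffun 'I_n -> T}) (U : {set 'I_n}) :
  (forall i, i \in U -> (i < a)%N -> g i \in S i.+1) ->
  hmass S Pa a g U <= cI S a Pa [set i in U | (i < a)%N].
Proof.
move=> gS; apply: (le_bigmax_cond _ (fun g => hmass S Pa a g U)).
by apply/forall_inP => i; rewrite inE => /andP[]; exact: gS.
Qed.

(* Off the union of the Fs j, [glue Fs] takes the arbitrary value [h set0 i]. *)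
Definition glue t (Fs : 'I_t -> {set 'I_n}) : {ffun 'I_n -> T} :=
  [ffun i => h (oapp Fs set0 [pick j | i \in Fs j]) i].

Lemma glueP t (Fs : 'I_t -> {set 'I_n}) i :
  i \in \bigcup_(j < t) Fs j -> exists2 j, i \in Fs j & glue Fs i = h (Fs j) i.
Proof.
case/bigcupP=> j _ ij; rewrite ffunE; case: pickP => [j' ij' | /(_ j)]; last by rewrite ij.
by exists j'.
Qed.

Section Moment.
Hypothesis hh : forall F i, F \in Fam -> i \in F -> h F i \in S i.+1.
Variables (k : nat) (t : nat).
Hypothesis hk : (a < k <= n)%N.

Let k_pred_lt : (k.-1 < n)%N.
Proof. by case/andP: hk; lia. Qed.

Let i0 : 'I_n := Ordinal k_pred_lt.

Lemma Nk_last F : F \in Nk Fam k -> i0 \in F.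
Proof.
rewrite inE => /and3P[_ /forall_inP subF]; rewrite negb_forall => /existsP[i].
rewrite negb_imply -leqNgt => /andP[iF ik]; suff -> : i0 = i by [].
by apply: val_inj => /=; have := subF i iF; lia.
Qed.

Lemma alpha_le_count x :
  alpha R S Fam h k x <= (\sum_(F in Nk Fam k) (inA (h F) (F :\ i0) x)%:R) / #|S k|%:R.
Proof.
rewrite /alpha ler_wpM2r ?invr_ge0 ?ler0n // sumr_pred_card ler_nat.
apply: leq_trans (leq_imset_card (fun F => h F i0) _); apply: subset_leq_card.
apply/subsetP => y; rewrite inE => /andP[_ /exists_inP[F FN /forall_inP HF]].
apply/imsetP; exists F.
  rewrite inE FN; apply/forall_inP => i; rewrite inE => /andP[ii0 iF].
  by have := HF i iF; rewrite ffunE; move: ii0; rewrite in_set1 -val_eqE => /negbTE ->.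
by have := HF i0 (Nk_last FN); rewrite ffunE eqxx => /eqP[].
Qed.

Lemma prod_inA_le_glue (Fs : {ffun 'I_t -> {set 'I_n}}) x :
  \prod_(j < t) (inA (h (Fs j)) (Fs j :\ i0) x)%:R <=
  (inA (glue Fs) [set i in \bigcup_(j < t) Fs j | (i < k.-1)%N] x)%:R :> R.
Proof.
have [allA | /forallPn[j /negbTE Aj]] := boolP [forall j, inA (h (Fs j)) (Fs j :\ i0) x].
  suff -> : inA (glue Fs) [set i in \bigcup_(j < t) Fs j | (i < k.-1)%N] x.
    by rewrite big1 // => j _; rewrite (forallP allA j).
  apply/forall_inP => i; rewrite inE => /andP[/glueP[j ij ->] ik].
  apply: (forall_inP (forallP allA j)).
  by rewrite !inE ij andbT -val_eqE /= neq_ltn ik.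
by rewrite (bigD1 j) //= Aj mul0r ler0n.
Qed.

Lemma Ealpha_le_moments :
  Ealpha S Fam h a Pa delta k t <=
  (#|S k|%:R ^+ t)^-1 * \sum_(Fs : {ffun 'I_t -> {set 'I_n}} | [forall j, Fs j \in Nk Fam k])
    \sum_(x in Qset n S k.-1) P k.-1 x * \prod_(j < t) (inA (h (Fs j)) (Fs j :\ i0) x)%:R.
Proof.
have ak : (a <= k.-1 <= n)%N by case/andP: hk; lia.
rewrite /Ealpha exchange_big mulr_sumr; apply: ler_sum => x Hx.
rewrite -mulr_sumr mulrCA ler_wpM2l ?Pk_ge0 //.
rewrite -(expr_sum_ffun _ (fun F => (inA (h F) (F :\ i0) x)%:R)) mulrC -expr_div_n.
rewrite lerXn2r ?nnegrE ?alpha_ge0 ?alpha_le_count //.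
by rewrite divr_ge0 ?sumr_ge0 ?ler0n.
Qed.

Lemma moment_term_le (Fs : {ffun 'I_t -> {set 'I_n}}) : [forall j, Fs j \in Nk Fam k] ->
  \sum_(x in Qset n S k.-1) P k.-1 x * \prod_(j < t) (inA (h (Fs j)) (Fs j :\ i0) x)%:R <=
  cI S a Pa [set i in \bigcup_(j < t) Fs j | (i < a)%N] *
  nu S delta [set i in \bigcup_(j < t) Fs j | (a <= i)%N && (i.+1 < k)%N].
Proof.
move=> FsN; set UF := \bigcup_(j < t) Fs j.
have ak : (a <= k.-1 <= n)%N by case/andP: hk; lia.
apply: (le_trans (y := hmass S (P k.-1) k.-1 (glue Fs) UF)).
  rewrite /hmass big_mkcondr; apply: ler_sum => x Hx.
  apply: le_trans (ler_wpM2l (Pk_ge0 ak Hx) (prod_inA_le_glue Fs x)) _.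
  by case: ifP; rewrite ?mulr1 ?mulr0.
apply: le_trans (hmass_Pk_le _ _ ak) _.
have -> : [set i in UF | (a <= i)%N && (i < k.-1)%N] =
          [set i in UF | (a <= i)%N && (i.+1 < k)%N].
  by apply/setP => i; rewrite !inE ltn_predRL.
apply: ler_wpM2r; first by apply: nu_ge0 => i; rewrite inE => /and3P[].
apply: hmass_le_cI => i /glueP[j ij ->] _.
by apply: hh => //; move/forallP: FsN => /(_ j); rewrite inE => /andP[].
Qed.

End Moment.
End Main.

Theorem lemma3p4 (R : realFieldType) (n : nat) (T : finType)
  (S : nat -> {set T})
  (hS : forall j, (1 <= j <= n)%N -> (2 <= #|S j|)%N)
  (Fam : {set {set 'I_n}}) (h : {set 'I_n} -> {ffun 'I_n -> T})
  (hFne : forall F, F \in Fam -> F != set0)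
  (hh : forall F i, F \in Fam -> i \in F -> h F i \in S i.+1)
  (a : nat) (ha : (a <= n)%N)
  (Pa : pt n T -> R)
  (hPa0 : forall x, x \in Qset n S a -> 0 <= Pa x)
  (hPa1 : \sum_(x in Qset n S a) Pa x = 1)
  (delta : nat -> R)
  (hdelta : forall j, (a < j <= n)%N -> 0 <= delta j <= 1 / 2)
  (k t : nat) (hk : (a < k <= n)%N) :
  Ealpha S Fam h a Pa delta k t <= rhs S Fam a Pa delta k t.
Proof.
apply: le_trans (Ealpha_le_moments Fam h hPa0 hdelta t hk) _.
rewrite /rhs ler_wpM2l ?invr_ge0 ?exprn_ge0 ?ler0n //.
by apply: ler_sum => Fs; apply: (moment_term_le hS hPa0 hdelta hh hk).
Qed.
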